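(* Let $G$ be a finite group of order $n$, let $f:G\to\mathbb{Q}$ be a class function with $f(g)=f(g^{-1})$ for all $g\in G$, and let $\Gamma_f=\operatorname{Cay}(G,f)$. Let $H_f=\{h\in\mathbb{Z}_n^*\mid f^h=f\}$. Then $\mathbb{SF}(\Gamma_f)\subseteq \mathbb{Q}(\zeta_n)$ and $H_f=\eta(\operatorname{Gal}(\mathbb{Q}(\zeta_n)/\mathbb{SF}(\Gamma_f)))$.
   Context: $\zeta_n=e^{2\pi i/n}$; $\mathbb{Z}_n^*$ is the unit group of $\mathbb{Z}/n\mathbb{Z}$; $\eta:\operatorname{Gal}(\mathbb{Q}(\zeta_n)/\mathbb{Q})\to\mathbb{Z}_n^*$ is the isomorphism with $\sigma(\zeta_n)=\zeta_n^{\eta(\sigma)}$. For $h\in\mathbb{Z}_n^*$, $f^h(g)=f(g^h)$. The Cayley colour graph $\Gamma_f=\operatorname{Cay}(G,f)$ has vertex set $G$ and adjacency matrix $[f(gh^{-1})]_{g,h\in G}$; its eigenvalues are those of this matrix. The splitting field $\mathbb{SF}(\Gamma_f)$ is the smallest subfield of $\mathbb{C}$ containing $\mathbb{Q}$ and all eigenvalues of $\Gamma_f$. *)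

From HB Require Import structures.
From mathcomp Require Import all_boot all_order all_algebra all_fingroup all_field.
Set Implicit Arguments. Unset Strict Implicit. Unset Printing Implicit Defensive.
Import GRing.Theory Num.Theory.
Local Open Scope ring_scope.

(* The finite group G is the whole carrier of gT : finGroupType; vertices are
   indexed by 'I_#|gT| through enum_val. *)

(* Adjacency matrix [f(g h^-1)]_{g,h in G} of Cay(G,f), over algC (= the
   algebraic complex numbers, containing all eigenvalues). *)
Definition cay_adj (gT : finGroupType) (f : gT -> rat) : 'M[algC]_#|gT| :=
  \matrix_(i, j) ratr (f ((enum_val i) * (enum_val j)^-1)%g).

Definition cay_eig (gT : finGroupType) (f : gT -> rat) (x : algC) : Prop :=
  eigenvalue (cay_adj f) x.

(* Smallest subfield of algC containing the set E (every subfield contains Q). *)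
Definition in_gen_subfield (E : algC -> Prop) (x : algC) : Prop :=
  forall S : {pred algC}, divring_closed S -> (forall y, E y -> y \in S) -> x \in S.

Definition in_SF (gT : finGroupType) (f : gT -> rat) (x : algC) : Prop :=
  in_gen_subfield (cay_eig f) x.

Definition in_Qz (z : algC) (x : algC) : Prop := in_gen_subfield (fun y => y = z) x.

(* sigma (a function on algC, only its restriction matters) restricts to a
   field automorphism of the subfield K. *)
Definition is_field_aut (K : algC -> Prop) (sigma : algC -> algC) : Prop :=
  (forall x, K x -> K (sigma x)) /\
  [/\
      forall x y, K x -> K y -> sigma (x + y) = sigma x + sigma y,
      forall x y, K x -> K y -> sigma (x * y) = sigma x * sigma y,
      sigma 1 = 1,
      forall x y, K x -> K y -> sigma x = sigma y -> x = y &
      forall y, K y -> exists2 x, K x & sigma x = y].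

Definition in_Gal_Qz_SF (gT : finGroupType) (f : gT -> rat) (z : algC)
    (sigma : algC -> algC) : Prop :=
  is_field_aut (in_Qz z) sigma /\ (forall x, in_SF f x -> sigma x = x).

(* Since f is a class function, the adjacency matrix of Cay(G, f) commutes with
   the left regular representation, so every eigenspace W is a subrepresentation
   and the eigenvalue is (1 / dim W) * \sum_u f(u) tr_W(u): a rational
   combination of sums of n-th roots of unity, hence an element of Q(zeta_n).
   The automorphism zeta |-> zeta^h of Q(zeta_n) sends tr_W(u) to tr_W(u^h), so
   when f^h = f it fixes every eigenvalue after reindexing by the bijection
   u |-> u^h. Conversely each irreducible character chi gives the eigenvalue
   |G| '[f, chi] / chi(1), with eigenvector g |-> chi(g^-1); if these are all
   fixed, then f o (.)^h' and f (h' the inverse of h mod n) have the same inner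
   product with every irreducible character, so they coincide and f^h = f. *)

From HB Require Import structures.
From mathcomp Require Import all_boot all_order all_algebra all_fingroup all_field.
From mathcomp Require Import all_solvable all_character.
From mathcomp Require Import ring.
From Stdlib Require Import ClassicalEpsilon.
Set Implicit Arguments.
Unset Strict Implicit.
Unset Printing Implicit Defensive.

Import GRing.Theory Num.Theory.
Local Open Scope ring_scope.

(* A boolean (classical) reflection of [in_gen_subfield E], so that the [rpred]
   closure lemmas apply to it. *)
Definition gen_subfield (E : algC -> Prop) : {pred algC} :=
  fun x => if excluded_middle_informative (in_gen_subfield E x) then true else false.

Lemma gen_subfieldP E x : reflect (in_gen_subfield E x) (x \in gen_subfield E).
Proof.
by rewrite unfold_in /gen_subfield; case: excluded_middle_informative; constructor.
Qed.

Lemma gen_subfield_closed E : divring_closed (gen_subfield E).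
Proof.
have lift (op : algC -> algC -> algC) :
    (forall S : {pred algC}, divring_closed S -> {in S &, forall x y, op x y \in S}) ->
  {in gen_subfield E &, forall x y, op x y \in gen_subfield E}.
  move=> opS x y /gen_subfieldP Kx /gen_subfieldP Ky; apply/gen_subfieldP => S SK ES.
  exact: opS SK _ _ (Kx S SK ES) (Ky S SK ES).
split; first by apply/gen_subfieldP => S [].
  by apply: lift => S [].
by apply: lift => S [].
Qed.

HB.instance Definition _ E :=
  GRing.isDivringClosed.Build algC (gen_subfield E) (gen_subfield_closed E).

Lemma gen_subfield_mem E y : E y -> y \in gen_subfield E.
Proof. by move=> Ey; apply/gen_subfieldP => S _; apply. Qed.

Lemma gen_subfield_sub E (S : {pred algC}) :
  divring_closed S -> (forall y, E y -> y \in S) -> {subset gen_subfield E <= S}.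
Proof. by move=> SK ES x /gen_subfieldP; apply. Qed.

Lemma gen_subfield_rmorph E E' (nu : {rmorphism algC -> algC}) :
    (forall y, E y -> nu y \in gen_subfield E') ->
  {homo nu : x / x \in gen_subfield E >-> x \in gen_subfield E'}.
Proof.
move=> EE' x; have preim_closed : divring_closed [pred y | nu y \in gen_subfield E'].
  split=> [|a b|a b]; rewrite !inE ?rmorph1 ?rmorphB ?fmorph_div ?rpred1 //.
    exact: rpredB.
  exact: rpred_div.
by move/(gen_subfield_sub preim_closed EE').
Qed.

Lemma gen_subfield_fixed E (nu : {rmorphism algC -> algC}) :
  (forall y, E y -> nu y = y) -> {in gen_subfield E, nu =1 id}.
Proof.
move=> Efix x; have fix_closed : divring_closed [pred y | nu y == y].
  split=> [|a b|a b]; rewrite !inE ?rmorph1 ?rmorphB ?fmorph_div //.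
    by move=> /eqP-> /eqP->.
  by move=> /eqP-> /eqP->.
have Efix' y : E y -> y \in [pred y | nu y == y] by move/Efix; rewrite inE => ->.
by move/(gen_subfield_sub fix_closed Efix')/eqP.
Qed.

Lemma rmorph_field_aut (K : algC -> Prop) (nu nu' : {rmorphism algC -> algC}) :
    (forall x, K x -> K (nu x)) -> (forall x, K x -> K (nu' x)) ->
    (forall x, K x -> nu (nu' x) = x) ->
  is_field_aut K nu.
Proof.
move=> Knu Knu' nuK; split=> //; split=> [x y _ _|x y _ _||x y _ _|y Ky].
- exact: rmorphD.
- exact: rmorphM.
- exact: rmorph1.
- exact: fmorph_inj.
- by exists (nu' y); [apply: Knu' | apply: nuK].
Qed.

Section GenSubfieldAut.

Variables (E : algC -> Prop) (sigma : algC -> algC).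
Hypothesis sigma_aut : is_field_aut (in_gen_subfield E) sigma.

Local Notation K := (gen_subfield E).

Let sigmaD x y : x \in K -> y \in K -> sigma (x + y) = sigma x + sigma y.
Proof.
by case: sigma_aut => _ [sD _ _ _ _] /gen_subfieldP Kx /gen_subfieldP Ky; apply: sD.
Qed.

Let sigmaM x y : x \in K -> y \in K -> sigma (x * y) = sigma x * sigma y.
Proof.
by case: sigma_aut => _ [_ sM _ _ _] /gen_subfieldP Kx /gen_subfieldP Ky; apply: sM.
Qed.

Let sigma1 : sigma 1 = 1.
Proof. by case: sigma_aut => _ []. Qed.

Let sigma_inj : {in K &, injective sigma}.
Proof.
case: sigma_aut => _ [_ _ _ sI _] x y /gen_subfieldP Kx /gen_subfieldP Ky.
exact: sI.
Qed.

Lemma field_autB x y : x \in K -> y \in K -> sigma (x - y) = sigma x - sigma y.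
Proof. by move=> Kx Ky; apply: (addIr (sigma y)); rewrite -sigmaD ?rpredB ?subrK. Qed.

Lemma field_aut0 : sigma 0 = 0.
Proof. by have := field_autB (rpred0 K) (rpred0 K); rewrite !subrr. Qed.

Lemma field_aut_div x y : x \in K -> y \in K -> sigma (x / y) = sigma x / sigma y.
Proof.
move=> Kx Ky; have [-> | y_neq0] := eqVneq y 0.
  by rewrite invr0 mulr0 field_aut0 invr0 mulr0.
have sy_neq0 : sigma y != 0.
  by apply: contra_neq y_neq0 => sy0; apply: sigma_inj; rewrite ?rpred0 // field_aut0.
by apply: (mulIf sy_neq0); rewrite -sigmaM ?rpred_div ?divfK.
Qed.

Lemma field_autX x k : x \in K -> sigma (x ^+ k) = sigma x ^+ k.
Proof.
move=> Kx; elim: k => [|k IHk]; first by rewrite !expr0.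
by rewrite !exprS sigmaM ?rpredX ?IHk.
Qed.

Lemma field_aut_prim_root n z :
  (0 < n)%N -> z \in K -> n.-primitive_root z -> n.-primitive_root (sigma z).
Proof.
move=> n_gt0 Kz pz; have szn : sigma z ^+ n = 1 by rewrite -field_autX ?prim_expr_order.
have [m pm dvd_mn] := prim_order_exists n_gt0 szn.
suff /eqP <- : m == n by [].
rewrite eqn_dvd dvd_mn (prim_order_dvd pz).
apply/eqP/sigma_inj; rewrite ?rpredX ?rpred1 //.
by rewrite field_autX // sigma1 prim_expr_order.
Qed.

Lemma gen_subfield_field_aut_eq (nu : {rmorphism algC -> algC}) :
  (forall y, E y -> sigma y = nu y) -> {in K, sigma =1 nu}.
Proof.
move=> Enu x; pose S := [pred y | (y \in K) && (sigma y == nu y)].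
have S_closed : divring_closed S.
  split=> [|a b|a b]; rewrite !inE; first by rewrite rpred1 sigma1 rmorph1 eqxx.
    move=> /andP[Ka /eqP sa] /andP[Kb /eqP sb].
    by rewrite rpredB // field_autB // sa sb rmorphB eqxx.
  move=> /andP[Ka /eqP sa] /andP[Kb /eqP sb].
  by rewrite rpred_div // field_aut_div // sa sb fmorph_div eqxx.
have ES y : E y -> y \in S by move=> Ey; rewrite inE gen_subfield_mem // Enu // eqxx.
by move=> /(gen_subfield_sub S_closed ES) /andP[_ /eqP].
Qed.

End GenSubfieldAut.

Lemma modn_inv_exists n h : (0 < n)%N -> coprime h n ->
  exists2 h', coprime h' n & (h * h' = 1 %[mod n])%N.
Proof.
move=> n_gt0 co; exists (h ^ (totient n).-1)%N; first by rewrite coprimeXl.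
by rewrite -expnS prednK ?totient_gt0 //; apply: Euler_exp_totient.
Qed.

Section GroupPowers.

Variable gT : finGroupType.

Lemma expg_mod_card1 (y : gT) k : k = 1 %[mod #|gT|] -> (y ^+ k)%g = y.
Proof.
move=> Hk; have dv : (#[y]%g %| #|gT|)%N by rewrite -cardsT order_dvdG ?in_setT.
by rewrite -expg_mod_order -(modn_dvdm k dv) Hk (modn_dvdm 1 dv) expg_mod_order expg1.
Qed.

Lemma expg_coprime_inj h : coprime h #|gT| -> injective (fun u : gT => (u ^+ h)%g).
Proof.
move=> co; have co' : coprime #|[set: gT]| h by rewrite cardsT coprime_sym.
apply: (can_inj (g := fun u : gT => (u ^+ expg_invn [set: gT] h)%g)) => u.
exact: (expgK co' (in_setT u)).
Qed.

End GroupPowers.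

Section ReprTrace.

Variables (gT : finGroupType) (d : nat) (rG : mx_representation algC [set: gT] d).

Lemma repr_mx_trace_roots (x : gT) :
  exists e : 'rV[algC]_d, (forall i, e 0 i ^+ #|gT| = 1) /\
    forall k, \tr (rG (x ^+ k)%g) = \sum_i e 0 i ^+ k.
Proof.
case: d rG => [|d'] rG'.
  by exists 0; split=> [[]//|k]; rewrite /mxtrace !big_ord0.
have Gx : x \in [set: gT] by rewrite inE.
have [e [[B uB rGx] [eo _] _ _]] := repr_rsim_diag rG' Gx.
exists e; split.
  move=> i; have := order_dvdG Gx; rewrite cardsT => /dvdnP[q ->].
  by rewrite mulnC exprM eo expr1n.
move=> k; rewrite (repr_mxX rG') // rGx.
have -> : (invmx B *m diag_mx e *m B) ^+ k = invmx B *m diag_mx e ^+ k *m B.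
  elim: k => [|k IHk]; first by rewrite !expr0 mulmx1 mulVmx.
  by rewrite exprS IHk -!mulmxE !mulmxA mulmxK // exprS -mulmxE !mulmxA.
have -> : diag_mx e ^+ k = diag_mx (\row_i (e 0 i ^+ k)).
  elim: k => [|k IHk]; first by apply/matrixP=> i j; rewrite !mxE expr0.
  rewrite exprS IHk -mulmxE mulmx_diag; congr diag_mx; apply/rowP=> i.
  by rewrite !mxE exprS.
rewrite mxtrace_mulC mulKVmx // mxtrace_diag.
by apply: eq_bigr => i _; rewrite mxE.
Qed.

Lemma repr_mx_trace_aut h (nu : {rmorphism algC -> algC}) :
    (forall w, w ^+ #|gT| = 1 -> nu w = w ^+ h) ->
  forall u, nu (\tr (rG u)) = \tr (rG (u ^+ h)%g).
Proof.
move=> Dnu u; have [e [e1 tr]] := repr_mx_trace_roots u.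
rewrite -{1}(expg1 u) !tr rmorph_sum; apply: eq_bigr => i _.
by rewrite expr1 Dnu.
Qed.

End ReprTrace.

Section RatClassFun.

Variables (gT : finGroupType) (f : gT -> rat).
Hypothesis f_class : forall g x : gT, f (g ^ x)%g = f g.

Fact rat_cfun_subproof : is_class_fun <<[set: gT]>>%g [ffun x => ratr (f x) : algC].
Proof.
rewrite genGid; apply: intro_class_fun => [x y _ _|x]; first by rewrite f_class.
by rewrite in_setT.
Qed.

Definition rat_cfun : 'CF([set: gT]) := Cfun 0 rat_cfun_subproof.

Lemma rat_cfunE x : rat_cfun x = ratr (f x).
Proof. exact: cfunE. Qed.

End RatClassFun.

Lemma cfdot_irr_mulG (gT : finGroupType) (phi : 'CF([set: gT])) (i : Iirr [set: gT]) :
  '[phi, 'chi_i] * #|[set: gT]|%:R = \sum_x phi x * 'chi_i (x^-1)%g.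
Proof.
rewrite cfdotE mulrC mulVKf ?neq0CG // (eq_bigl xpredT) => [|x]; last by rewrite in_setT.
by apply: eq_bigr => x _; rewrite irr_inv.
Qed.

Lemma rmorph_irr_expg (gT : finGroupType) h (nu : {rmorphism algC -> algC})
    (i : Iirr [set: gT]) (y : gT) :
  (forall w, w ^+ #|gT| = 1 -> nu w = w ^+ h) -> nu ('chi_i y) = 'chi_i (y ^+ h)%g.
Proof.
move=> Dnu; have /char_reprP[rG ->] := irr_char i.
by rewrite !cfunE !in_setT !mulr1n (repr_mx_trace_aut rG Dnu).
Qed.

Section CayleyGraph.

Variables (gT : finGroupType) (f : gT -> rat).
Hypothesis f_class : forall g x : gT, f (g ^ x)%g = f g.

Local Notation n := #|gT|.

Let sum_enum (F : gT -> algC) : \sum_(k < n) F (enum_val k) = \sum_x F x.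
Proof. by rewrite -(big_enum_val F). Qed.

Let sum_delta (a : gT) (F : gT -> algC) : \sum_x ((x == a)%:R * F x) = F a.
Proof.
by rewrite (bigD1 a) //= eqxx mul1r big1 ?addr0 // => x /negbTE->; rewrite mul0r.
Qed.

Definition lreg_mx (u : gT) : 'M[algC]_n :=
  \matrix_(i, j) ((enum_val j == u^-1 * enum_val i)%g)%:R.

Lemma lreg_mx_repr : mx_repr [set: gT] lreg_mx.
Proof.
split=> [|u w _ _]; apply/matrixP=> i j; rewrite !mxE.
  by rewrite invg1 mul1g (inj_eq enum_val_inj) eq_sym.
under eq_bigr do rewrite !mxE.
rewrite (sum_enum (fun x => ((x == u^-1 * enum_val i)%g)%:R *
   ((enum_val j == w^-1 * x)%g)%:R)).
by rewrite sum_delta invMg mulgA.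
Qed.

Definition lreg_repr := MxRepresentation lreg_mx_repr.

Lemma cay_adj_lreg : cay_adj f = \sum_u ratr (f u) *: lreg_mx u.
Proof.
apply/matrixP=> i j; rewrite !mxE summxE.
have eqM (a b u : gT) : (b == u^-1 * a)%g = (u == a * b^-1)%g.
  by apply/eqP/eqP=> ->; rewrite invMg invgK ?mulKVg ?mulgKV.
under eq_bigr do rewrite !mxE eqM mulrC.
by rewrite sum_delta.
Qed.

Lemma cay_adj_lreg_comm u : cay_adj f *m lreg_mx u = lreg_mx u *m cay_adj f.
Proof.
apply/matrixP=> i j; rewrite !mxE.
under eq_bigr do rewrite !mxE.
under [RHS]eq_bigr do rewrite !mxE.
rewrite (sum_enum (fun x => ratr (f (enum_val i * x^-1)%g) *
   ((enum_val j == u^-1 * x)%g)%:R)).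
rewrite (sum_enum (fun x => ((x == u^-1 * enum_val i)%g)%:R *
   ratr (f (x * (enum_val j)^-1)%g))).
rewrite sum_delta.
have eqM (b x : gT) : (b == u^-1 * x)%g = (x == u * b)%g.
  by apply/eqP/eqP=> ->; rewrite ?mulKVg ?mulKg.
under eq_bigr do rewrite eqM mulrC.
rewrite sum_delta -[in RHS](f_class _ u^-1) conjgE invgK.
by rewrite invMg !mulgA mulgV mul1g.
Qed.

(* The eigenspace of [l] is stable under the left regular representation, since
   that commutes with [cay_adj f]; the trace of [cay_adj f] on it is [l] times
   its dimension. *)
Lemma cay_eigenvalue_trace l : eigenvalue (cay_adj f) l ->
  exists d (rW : mx_representation algC [set: gT] d),
    (0 < d)%N /\ l * d%:R = \sum_u ratr (f u) * \tr (rW u).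
Proof.
rewrite /eigenvalue => nzW; set W := eigenspace (cay_adj f) l in nzW *.
have eW : W *m cay_adj f = l *: W by apply/eigenspaceP.
have modW : mxmodule lreg_repr W.
  apply/mxmoduleP => u _; apply/eigenspaceP.
  by rewrite -mulmxA /= -cay_adj_lreg_comm mulmxA eW -scalemxAl.
exists (\rank W), (submod_repr modW); split; first by rewrite lt0n mxrank_eq0.
have sum_submod : \sum_u ratr (f u) *: submod_repr modW u = l%:M.
  transitivity (in_submod W (val_submod (U:=W) 1%:M *m cay_adj f)).
    rewrite cay_adj_lreg mulmx_sumr in_submodE mulmx_suml; apply: eq_bigr => u _.
    by rewrite /= /submod_mx in_submodE -scalemxAr -scalemxAl.
  have /eigenspaceP -> := val_submodP (U:=W) (1%:M : 'M_(\rank W)).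
  by rewrite in_submodE -scalemxAl -in_submodE val_submodK scalemx1.
rewrite mulr_natr -mxtrace_scalar -sum_submod raddf_sum /=.
by apply: eq_bigr => u _; rewrite mxtraceZ.
Qed.

Lemma cay_eigenvalue_irr (F : 'CF([set: gT])) (i : Iirr [set: gT]) :
    (forall x, F x = ratr (f x)) ->
  eigenvalue (cay_adj f) ('[F, 'chi_i] * #|[set: gT]|%:R / 'chi_i 1%g).
Proof.
move=> FE; apply/eigenvalueP.
exists (\row_k 'chi_i ((enum_val k)^-1)%g); last first.
  apply/eqP => /rowP /(_ (enum_rank 1%g)); rewrite !mxE enum_rankK invg1.
  by apply/eqP; apply: irr1_neq0.
apply/rowP => k; rewrite !mxE.
under eq_bigr do rewrite !mxE -FE.
rewrite (sum_enum (fun x => 'chi_i (x^-1)%g * F (x * (enum_val k)^-1)%g)).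
set y := ((enum_val k)^-1)%g.
have orth a : \sum_x 'chi_a (x * y)%g * 'chi_i (x^-1)%g =
    (a == i)%:R * ('chi_a y / 'chi_a 1%g) * #|[set: gT]|%:R.
  rewrite -(generalized_orthogonality_relation y a i) mulrC mulVKf ?neq0CG //.
  by apply: eq_bigl => x; rewrite in_setT.
rewrite (eq_bigr (fun x =>
    \sum_a 'chi_i (x^-1)%g * ('[F, 'chi_a] * 'chi_a (x * y)%g))); last first.
  move=> x _; rewrite {1}(cfun_sum_cfdot F) sum_cfunE mulr_sumr.
  by apply: eq_bigr => a _; rewrite cfunE.
rewrite exchange_big /=.
have inner a : \sum_x 'chi_i (x^-1)%g * ('[F, 'chi_a] * 'chi_a (x * y)%g) =
   '[F, 'chi_a] * ((a == i)%:R * ('chi_a y / 'chi_a 1%g) * #|[set: gT]|%:R).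
  rewrite -orth mulr_sumr; apply: eq_bigr => x _.
  by rewrite mulrCA; congr (_ * _); rewrite mulrC.
rewrite (eq_bigr _ (fun a _ => inner a)) (bigD1 i) //= big1 ?addr0 => [|a a_neq_i].
  by rewrite eqxx mul1r; ring.
by rewrite (negbTE a_neq_i) !mul0r mulr0.
Qed.


Lemma cay_eigenvalue_mem (S : divringClosed algC) z l :
  n.-primitive_root z -> z \in S -> eigenvalue (cay_adj f) l -> l \in S.
Proof.
move=> pz Sz /cay_eigenvalue_trace[d [rW [d_gt0 Dl]]].
have d_neq0 : d%:R != 0 :> algC by rewrite pnatr_eq0 -lt0n.
rewrite -[l](mulfK d_neq0) Dl rpred_div ?rpred_nat // rpred_sum // => u _.
rewrite rpredM ?rpred_rat //.
have [e [e1 tr]] := repr_mx_trace_roots rW u.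
rewrite -(expg1 u) tr rpred_sum // => i _.
by have [k ->] := prim_rootP pz (e1 i); rewrite expr1 rpredX.
Qed.

Lemma cay_eigenvalue_aut_fixed h (nu : {rmorphism algC -> algC}) l :
    coprime h n -> (forall w, w ^+ n = 1 -> nu w = w ^+ h) ->
    (forall u : gT, f (u ^+ h)%g = f u) ->
  eigenvalue (cay_adj f) l -> nu l = l.
Proof.
move=> co Dnu f_h /cay_eigenvalue_trace[d [rW [d_gt0 Dl]]].
have d_neq0 : d%:R != 0 :> algC by rewrite pnatr_eq0 -lt0n.
apply: (mulIf d_neq0); rewrite Dl.
have := congr1 nu Dl; rewrite rmorphM rmorph_nat => ->.
rewrite rmorph_sum [RHS](reindex_inj (expg_coprime_inj co)) /=.
by apply: eq_bigr => u _; rewrite rmorphM fmorph_rat (repr_mx_trace_aut rW Dnu) f_h.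
Qed.



Lemma exp_invariant_of_eigenvalues_fixed h (nu : {rmorphism algC -> algC}) :
    coprime h n -> (forall w, w ^+ n = 1 -> nu w = w ^+ h) ->
    (forall l, eigenvalue (cay_adj f) l -> nu l = l) ->
  forall u : gT, f (u ^+ h)%g = f u.
Proof.
move=> co Dnu nu_fix.
have n_gt0 : (0 < n)%N by rewrite -cardsT cardG_gt0.
have [h' _ hh'] := modn_inv_exists n_gt0 co.
have f'_class (g x : gT) : f ((g ^ x) ^+ h')%g = f (g ^+ h')%g.
  by rewrite -conjXg f_class.
pose F := rat_cfun f_class; pose F' := rat_cfun f'_class.
have cfdotF' i : '[F', 'chi_i] = '[F, 'chi_i].
  have := nu_fix _ (cay_eigenvalue_irr i (rat_cfunE f_class)).
  rewrite fmorph_div (rmorph_irr_expg _ _ Dnu) expg1n => /(divIf (irr1_neq0 i)) nuF.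
  apply: (mulIf (neq0CG [set: gT])); rewrite -nuF !cfdot_irr_mulG rmorph_sum.
  rewrite (reindex_inj (expg_coprime_inj co)) /=; apply: eq_bigr => x _.
  rewrite !rat_cfunE rmorphM fmorph_rat (rmorph_irr_expg _ _ Dnu) expVgn.
  by rewrite -expgM (expg_mod_card1 _ hh').
have F'F : F' = F.
  rewrite [LHS]cfun_sum_cfdot [RHS]cfun_sum_cfdot.
  by apply: eq_bigr => i _; rewrite cfdotF'.
move=> u; have := congr1 (fun phi : 'CF([set: gT]) => phi (u ^+ h)%g) F'F.
by rewrite /= !rat_cfunE -expgM (expg_mod_card1 _ hh') => /fmorph_inj.
Qed.

End CayleyGraph.

Lemma in_Qz_rmorph z k (nu : {rmorphism algC -> algC}) x :
  nu z = z ^+ k -> in_Qz z x -> in_Qz z (nu x).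
Proof.
move=> nu_z /gen_subfieldP Qx; apply/gen_subfieldP; move: Qx.
by apply: gen_subfield_rmorph => y ->; rewrite nu_z rpredX // gen_subfield_mem.
Qed.

Lemma cay_SF_sub_Qz (gT : finGroupType) (f : gT -> rat) z :
    (forall g x : gT, f (g ^ x)%g = f g) -> #|gT|.-primitive_root z ->
  forall x, in_SF f x -> in_Qz z x.
Proof.
move=> f_class pz x SFx; apply/gen_subfieldP; apply: SFx (gen_subfield_closed _) _ => l.
exact: cay_eigenvalue_mem f_class _ _ _ pz (gen_subfield_mem _).
Qed.

Lemma Gal_Qz_SF_of_exp_invariant (gT : finGroupType) (f : gT -> rat) z h :
    (forall g x : gT, f (g ^ x)%g = f g) -> #|gT|.-primitive_root z ->
    coprime h #|gT| -> (forall g : gT, f (g ^+ h)%g = f g) ->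
  exists sigma, in_Gal_Qz_SF f z sigma /\ sigma z = z ^+ h.
Proof.
move=> f_class pz co f_h.
have n_gt0 : (0 < #|gT|)%N by rewrite -cardsT cardG_gt0.
have [h' co' hh'] := modn_inv_exists n_gt0 co.
have [nu Dnu] := Qn_aut_exists co; have [nu' Dnu'] := Qn_aut_exists co'.
have zn := prim_expr_order pz.
exists nu; split; last exact: Dnu.
split.
  apply: (rmorph_field_aut (nu' := nu')) => x; first exact: in_Qz_rmorph (Dnu _ zn).
    exact: in_Qz_rmorph (Dnu' _ zn).
  move=> /gen_subfieldP; apply: (gen_subfield_fixed (nu := nu \o nu')) => y ->.
  rewrite /= Dnu' // rmorphXn Dnu // -exprM.
  by rewrite -(prim_expr_mod pz) hh' prim_expr_mod // expr1.
move=> x /gen_subfieldP; apply: gen_subfield_fixed => l.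
exact: cay_eigenvalue_aut_fixed f_class _ _ _ co Dnu f_h.
Qed.

Lemma exp_invariant_of_Gal_Qz_SF (gT : finGroupType) (f : gT -> rat) z h :
    (forall g x : gT, f (g ^ x)%g = f g) -> #|gT|.-primitive_root z ->
    (exists sigma, in_Gal_Qz_SF f z sigma /\ sigma z = z ^+ h) ->
  coprime h #|gT| /\ (forall g : gT, f (g ^+ h)%g = f g).
Proof.
move=> f_class pz [sigma [[sigma_aut sigma_SF] sigma_z]].
have n_gt0 : (0 < #|gT|)%N by rewrite -cardsT cardG_gt0.
have co : coprime h #|gT|.
  rewrite -(prim_root_exp_coprime h pz) -sigma_z.
  have Qz_z : z \in gen_subfield (fun y => y = z) by exact: gen_subfield_mem.
  exact: (field_aut_prim_root sigma_aut n_gt0 Qz_z pz).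
split=> //; have [nu Dnu] := Qn_aut_exists co.
have sigma_nu : {in gen_subfield (fun y => y = z), sigma =1 nu}.
  apply: (gen_subfield_field_aut_eq (E := fun y => y = z) sigma_aut) => y ->;
  by rewrite sigma_z Dnu // prim_expr_order.
apply: (exp_invariant_of_eigenvalues_fixed f_class co Dnu) => l El.
have SFl : in_SF f l by apply/gen_subfieldP/gen_subfield_mem.
rewrite -sigma_nu; first exact: sigma_SF.
exact/gen_subfieldP/(cay_SF_sub_Qz f_class pz).
Qed.

Theorem mainTheorem5 (gT : finGroupType) (f : gT -> rat) (z : algC) :
  (forall g x : gT, f (g ^ x)%g = f g) ->
  (forall g : gT, f (g^-1)%g = f g) ->
  #|gT|.-primitive_root z ->
  (forall x, in_SF f x -> in_Qz z x) /\
  (forall h : 'I_#|gT|,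
     (coprime h #|gT| /\ (forall g : gT, f (g ^+ h)%g = f g)) <->
     (exists sigma, in_Gal_Qz_SF f z sigma /\ sigma z = z ^+ h)).
Proof.
move=> f_class _ pz; split; first exact: cay_SF_sub_Qz.
move=> h; split; first by case; apply: Gal_Qz_SF_of_exp_invariant.
exact: exp_invariant_of_Gal_Qz_SF.
Qed.
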